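(* Let $f:\mathbb{R}^d\to\mathbb{R}$ be $(p,C)$-smooth with $p=q+\beta$, $q\in\mathbb{N}_0$, $\beta\in(0,1]$, let $A\ge1$, $K\in\mathbb{N}$, and let $\delta$, $u_{\mathbf{k}}$, $I$ and $P$ be as in the context. Let $\mathbf{r}\in I$ and $x\in[u_{\mathbf{r}},u_{\mathbf{r}}+\delta\cdot\mathbf{1})$. Then $P(x)=(Tf)_{q,u_{\mathbf{r}}}(x)$.
   Context: $(p,C)$-smooth: all partial derivatives of order $q$ exist and are $\beta$-Hölder with constant $C$. For a $q$ times differentiable $g$ and $u\in\mathbb{R}^d$, $(Tg)_{q,u}(x)=\sum_{j_1+\dots+j_d\le q}\frac{1}{j_1!\cdots j_d!}\frac{\partial^{j_1+\dots+j_d}g}{\partial (x^{(1)})^{j_1}\cdots\partial (x^{(d)})^{j_d}}(u)\,(x^{(1)}-u^{(1)})^{j_1}\cdots(x^{(d)}-u^{(d)})^{j_d}$ is the Taylor polynomial of degree $q$ around $u$. Let $\delta=2A/K$, $u_k=-A+k\cdot 2A/K$ ($k=0,\dots,K-1$), $I=\{0,\dots,K-1\}^d$, $u_{\mathbf{k}}=(u_{k^{(1)}},\dots,u_{k^{(d)}})$ for $\mathbf{k}\in I$. For $\mathbf{a},\mathbf{b}\in\mathbb{R}^d$, $\mathbf{a}\le\mathbf{b}$ means $a^{(l)}\le b^{(l)}$ for all $l$, and $\mathbf{a}<\mathbf{b}$ means $\mathbf{a}\le\mathbf{b}$ and $\mathbf{a}\ne\mathbf{b}$; $[\mathbf{a},\infty)=\prod_l[a^{(l)},\infty)$,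 $[\mathbf{a},\mathbf{b})=\prod_l[a^{(l)},b^{(l)})$, $\mathbf{1}=(1,\dots,1)$. Define $P_{\mathbf{0}}=(Tf)_{q,u_{\mathbf{0}}}$ and recursively $P_{\mathbf{k}}=\big(T(f-\sum_{\mathbf{l}\in I:u_{\mathbf{l}}<u_{\mathbf{k}}}P_{\mathbf{l}})\big)_{q,u_{\mathbf{k}}}$, and $P(x)=\sum_{\mathbf{k}\in I}P_{\mathbf{k}}(x)\,1_{[u_{\mathbf{k}},\infty)}(x)$. *)

From HB Require Import structures.
From mathcomp Require Import all_boot all_order all_algebra.
From mathcomp Require Import all_classical all_reals all_analysis.
Unset Printing Implicit Defensive.
Import Order.TTheory GRing.Theory Num.Theory.
Import numFieldNormedType.Exports.
Local Open Scope ring_scope.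

Section Defs.
Variables (R : realType) (d : nat).

Definition evec (i : 'I_d) : 'rV[R]_d := delta_mx 0 i.

Definition pderiv (i : 'I_d) (g : 'rV[R]_d -> R) : 'rV[R]_d -> R :=
  'D_(evec i) g.

Definition pderivs (s : seq 'I_d) (g : 'rV[R]_d -> R) : 'rV[R]_d -> R :=
  foldr pderiv g s.

(* multi-index j = (j_1,...,j_d): d^{|j|} g / d(x^(1))^{j_1} ... d(x^(d))^{j_d} *)
Definition mindex_seq (j : 'I_d -> nat) : seq 'I_d :=
  flatten [seq nseq (j i) i | i <- enum 'I_d].

Definition dmulti (j : 'I_d -> nat) (g : 'rV[R]_d -> R) : 'rV[R]_d -> R :=
  pderivs (mindex_seq j) g.

Definition q_partially_derivable (q : nat) (g : 'rV[R]_d -> R) : Prop :=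
  forall s : seq 'I_d, (size s < q)%N ->
    forall (i : 'I_d) (x : 'rV[R]_d), derivable (pderivs s g) x (evec i).

Definition enorm (x : 'rV[R]_d) : R := Num.sqrt (\sum_i x 0 i ^+ 2).

Definition pC_smooth (q : nat) (beta C : R) (g : 'rV[R]_d -> R) : Prop :=
  q_partially_derivable q g /\
  forall j : 'I_d -> nat, (\sum_i j i)%N = q ->
    forall x z : 'rV[R]_d,
      `|dmulti j g x - dmulti j g z| <= C * powR (enorm (x - z)) beta.

Definition taylor (q : nat) (g : 'rV[R]_d -> R) (u : 'rV[R]_d) : 'rV[R]_d -> R :=
  fun x => \sum_(j : {ffun 'I_d -> 'I_q.+1} | (\sum_i (j i : nat) <= q)%N)
    (\prod_i ((j i)`!)%:R)^-1 * dmulti (fun i => nat_of_ord (j i)) g u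
      * \prod_i (x 0 i - u 0 i) ^+ j i.

Definition gdelta (A : R) (K : nat) : R := 2 * A / K%:R.
Definition gpt (A : R) (K : nat) (k : nat) : R := - A + k%:R * gdelta A K.
Definition gvec (A : R) (K : nat) (k : {ffun 'I_d -> 'I_K}) : 'rV[R]_d :=
  \row_i gpt A K (k i).

Definition vle (a b : 'rV[R]_d) : bool := [forall i, a 0 i <= b 0 i].
Definition vlt (a b : 'rV[R]_d) : bool := vle a b && (a != b).

Definition Pglob (A : R) (K : nat) (Pk : {ffun 'I_d -> 'I_K} -> 'rV[R]_d -> R)
  (x : 'rV[R]_d) : R :=
  \sum_(k : {ffun 'I_d -> 'I_K}) (if vle (gvec A K k) x then Pk k x else 0).

End Defs.
Arguments gvec {R d} A K k.
Arguments pC_smooth {R d} q beta C g.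
Arguments taylor {R d} q g u x.
Arguments vlt {R d} a b.
Arguments vle {R d} a b.
Arguments dmulti {R d} j g _.
Arguments enorm {R d} x.
Arguments evec {R d} i.
Arguments gdelta {R} A K.
Arguments Pglob {R d} A K Pk x.

(* Each P_k is a Taylor polynomial, hence a polynomial of degree at most q,
   and the Taylor operator of degree q fixes such polynomials; as
   differentiation is linear, T(f - S) = Tf - S for every such S.  For x in the
   cell [u_r, u_r + delta 1), the grid points u_k <= x are exactly u_r and the
   u_l < u_r, so with S = sum_(u_l < u_r) P_l we get
   P(x) = P_r(x) + S(x) = T(f - S)(x) + S(x) = Tf(x). *)

From HB Require Import structures.
From mathcomp Require Import all_boot all_order all_algebra.
From mathcomp Require Import all_classical all_reals all_analysis.
From mathcomp Require Import ring.
Import Order.TTheory GRing.Theory Num.Theory.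
Import numFieldNormedType.Exports.
Local Open Scope ring_scope.

Section Polynomials.
Variables (R : realType) (d : nat).
Implicit Types (j : 'I_d -> nat) (u v x : 'rV[R]_d).

Lemma derive_along_line (f : 'rV[R]_d -> R) a v :
  'D_v f a = 'D_1 (fun h : R => f (h *: v + a)) 0.
Proof.
rewrite /derive; set g1 := fun h => h^-1 *: _; set g2 := fun h => h^-1 *: _.
suff -> : g1 = g2 by [].
by apply/funext => h; rewrite /g1 /g2 /= addr0 scale0r add0r [_%:A]mulr1.
Qed.

Lemma is_derive0_mul_powD (c b : R) n :
  is_derive (0 : R) 1 (fun h : R => c * (h + b) ^+ n) (c * (n%:R * b ^+ n.-1)).
Proof.
have -> : (fun h : R => c * (h + b) ^+ n) = cst c * (id + cst b) ^+ n.
  by apply/funext => h; rewrite /= exprfctE.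
by apply: is_derive_eq; rewrite scaler0 addr0 [(id + cst b) 0]add0r addr0 scaler1.
Qed.

Definition monomial j v (y : 'rV[R]_d) : R := \prod_k (y 0 k - v 0 k) ^+ j k.

Lemma monomial_along j v a i :
  (fun h : R => monomial j v (h *: evec i + a)) =
  fun h => (\prod_(k | k != i) (a 0 k - v 0 k) ^+ j k) *
           (h + (a 0 i - v 0 i)) ^+ j i.
Proof.
apply/funext => h; rewrite /monomial (bigD1 i) //= mulrC; congr (_ * _).
  by apply: eq_bigr => k ki; rewrite !mxE eqxx (negbTE ki) /= mulr0 add0r.
by rewrite !mxE !eqxx /= mulr1 addrA.
Qed.

Definition mindex_dec j (i k : 'I_d) : nat := (j k - (k == i))%N.

Lemma is_derive_monomial j v a i :
  is_derive a (evec i) (monomial j v) ((j i)%:R * monomial (mindex_dec j i) v a).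
Proof.
have D := is_derive0_mul_powD (\prod_(k | k != i) (a 0 k - v 0 k) ^+ j k)
  (a 0 i - v 0 i) (j i).
apply: DeriveDef; first by apply/derivable1P; rewrite monomial_along; case: D.
rewrite derive_along_line monomial_along; case: D => _ ->.
rewrite /monomial [in RHS](bigD1 i) //= /mindex_dec eqxx subn1.
rewrite [X in _ = _ * (_ * X)](eq_bigr (fun k => (a 0 k - v 0 k) ^+ j k)); first ring.
by move=> k ki; rewrite (negbTE ki) subn0.
Qed.

(* A term (j, v, c) stands for y |-> c * (y - v)^j; finite sums of terms are
   closed under partial differentiation. *)
Definition term := ((('I_d -> nat) * 'rV[R]_d) * R)%type.

Definition polyfun (l : seq term) (y : 'rV[R]_d) : R :=
  \sum_(e <- l) e.2 * monomial e.1.1 e.1.2 y.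

Definition term_deriv (i : 'I_d) (e : term) : term :=
  ((mindex_dec e.1.1 i, e.1.2), e.2 * (e.1.1 i)%:R).

Lemma is_derive_polyfun l a i :
  is_derive a (evec i) (polyfun l) (polyfun (map (term_deriv i) l) a).
Proof.
elim: l => [|e l IH].
  have -> : polyfun [::] = cst 0 by apply/funext => y; rewrite /polyfun big_nil.
  exact: is_derive_cst.
have -> : polyfun (e :: l) = e.2 *: monomial e.1.1 e.1.2 + polyfun l.
  by apply/funext => y; rewrite /polyfun big_cons.
have := is_deriveD (is_deriveZ e.2 (is_derive_monomial e.1.1 e.1.2 a i)) IH.
move=> De; apply: is_derive_eq.
rewrite /= {2}/polyfun big_cons /term_deriv /= -/(polyfun _ a).
by rewrite /GRing.scale /= mulrA [e.2 * _]mulrC.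
Qed.

Lemma pderiv_polyfun i l :
  pderiv R d i (polyfun l) = polyfun (map (term_deriv i) l).
Proof. by apply/funext => a; case: (is_derive_polyfun l a i). Qed.

Lemma pderivs_polyfun s l :
  pderivs R d s (polyfun l) = polyfun (map (fun e => foldr term_deriv e s) l).
Proof.
elim: s => [|i s IH] /=; first by rewrite map_id.
by rewrite IH pderiv_polyfun -map_comp.
Qed.

Lemma derivable_pderivs_polyfun s l a i :
  derivable (pderivs R d s (polyfun l)) a (evec i).
Proof.
by rewrite pderivs_polyfun; case: (is_derive_polyfun (map (foldr term_deriv ^~ s) l) a i).
Qed.

Lemma foldr_term_deriv e s :
  foldr term_deriv e s =
  ((fun k => (e.1.1 k - count_mem k s)%N, e.1.2),
   e.2 * \prod_k (e.1.1 k ^_ count_mem k s)%:R).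
Proof.
elim: s => [|i s IH] /=.
  case: e => [[j v] c] /=; congr (_, _, _); first by apply/funext => k; rewrite subn0.
  by rewrite big1 ?mulr1 // => k _; rewrite ffactn0.
rewrite IH /term_deriv /mindex_dec /=; congr (_, _, _).
  by apply/funext => k; rewrite -subnDA addnC eq_sym.
rewrite -mulrA; congr (_ * _).
rewrite [in RHS](bigD1 i) //= [in LHS](bigD1 i) //= eqxx /= add1n ffactnSr natrM.
rewrite mulrAC; congr (_ * _ * _); apply: eq_bigr => k ki.
by rewrite eq_sym (negbTE ki).
Qed.

Lemma count_mindex_seq j k : count_mem k (mindex_seq d j) = j k.
Proof.
rewrite /mindex_seq count_flatten -map_comp sumnE big_map big_enum /=.
rewrite (bigD1 k) //= count_nseq /= eqxx mul1n big1 ?addn0 // => i ik.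
by rewrite count_nseq /= (negbTE ik).
Qed.

Lemma size_mindex_seq j : size (mindex_seq d j) = (\sum_i j i)%N.
Proof.
rewrite /mindex_seq size_flatten /shape -map_comp sumnE big_map big_enum /=.
by apply: eq_bigr => i _; rewrite size_nseq.
Qed.

Lemma dmulti_polyfun j l u :
  dmulti j (polyfun l) u =
  \sum_(e <- l) e.2 * ((\prod_k (e.1.1 k ^_ j k)%:R) *
                       monomial (fun k => (e.1.1 k - j k)%N) e.1.2 u).
Proof.
rewrite /dmulti pderivs_polyfun /polyfun big_map; apply: eq_bigr => e _.
rewrite foldr_term_deriv /= -mulrA /monomial.
by congr (_ * (_ * _)); apply: eq_bigr => k _; rewrite count_mindex_seq.
Qed.

Lemma dmulti_monomial k j v u :
  dmulti k (monomial j v) u =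
  (\prod_i (j i ^_ k i)%:R) * monomial (fun i => (j i - k i)%N) v u.
Proof.
have -> : monomial j v = polyfun [:: ((j, v), 1)].
  by apply/funext => y; rewrite /polyfun big_seq1 mul1r.
by rewrite dmulti_polyfun big_seq1 mul1r.
Qed.

(* Re-expand (x - v)^j around u by the binomial theorem in each coordinate;
   the degree bound makes every term of the expansion appear in the Taylor sum. *)
Lemma taylor_monomial q j v u : (\sum_i j i <= q)%N ->
  taylor q (monomial j v) u = monomial j v.
Proof.
move=> jq; apply/funext => x; rewrite /taylor.
under eq_bigr => k _ do rewrite dmulti_monomial.
pose G i (m : nat) := ((m`!)%:R)^-1 * (j i ^_ m)%:R *
  (u 0 i - v 0 i) ^+ (j i - m) * (x 0 i - u 0 i) ^+ m.
transitivity (\sum_(k : {ffun 'I_d -> 'I_q.+1}) \prod_i G i (k i)).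
  rewrite big_mkcond; apply: eq_bigr => k _; case: ifP => kq.
    by rewrite /G !big_split /= prodfV /monomial !mulrA.
  have [i ji_lt] : exists i, (j i < k i)%N.
    apply/existsP; apply: contraFT kq => /existsPn jk.
    by apply: leq_trans jq; apply: leq_sum => i _; rewrite leqNgt jk.
  by rewrite (bigD1 i) //= /G ffact_small // mulr0 !mul0r.
rewrite -(bigA_distr_bigA (fun i (m : 'I_q.+1) => G i m)) /monomial.
apply: eq_bigr => i _.
have jiq : (j i <= q)%N by apply: leq_trans jq; rewrite (bigD1 i) //= leq_addr.
have -> : x 0 i - v 0 i = (u 0 i - v 0 i) + (x 0 i - u 0 i) by ring.
rewrite exprDn (big_ord_widen q.+1 (fun m => (u 0 i - v 0 i) ^+ (j i - m) *
   (x 0 i - u 0 i) ^+ m *+ 'C(j i, m))) // [RHS]big_mkcond.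
apply: eq_bigr => m _; case: ifP => mj; last first.
  by rewrite /G ffact_small ?mulr0 ?mul0r // ltnNge -ltnS mj.
rewrite /G -bin_ffact natrM [X in _^-1 * X]mulrC mulKf ?pnatr_eq0 -?lt0n ?fact_gt0 //.
by rewrite -!mulrA mulr_natl.
Qed.

Definition term_deg_le (q : nat) (e : term) : bool := (\sum_i e.1.1 i <= q)%N.

Lemma taylor_polyfun q l u :
  all (term_deg_le q) l -> taylor q (polyfun l) u = polyfun l.
Proof.
move=> lq; apply/funext => x; rewrite /taylor.
under eq_bigr => k _ do rewrite dmulti_polyfun big_distrr big_distrl.
rewrite exchange_big /polyfun big_seq [RHS]big_seq; apply: eq_bigr => e le.
rewrite -(taylor_monomial _ _ _ u (allP lq e le)) /taylor big_distrr /=.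
by apply: eq_bigr => k _; rewrite dmulti_monomial; ring.
Qed.

Definition poly_deg_le (q : nat) (g : 'rV[R]_d -> R) : Prop :=
  exists2 l, all (term_deg_le q) l & g = polyfun l.

Lemma poly_deg_le_taylor q g u : poly_deg_le q (taylor q g u).
Proof.
pose ks :=
  [seq k : {ffun 'I_d -> 'I_q.+1} <- index_enum _ | (\sum_i (k i : nat) <= q)%N].
exists [seq ((fun i => nat_of_ord (k i), u),
             (\prod_i ((k i)`!)%:R)^-1 * dmulti (fun i => nat_of_ord (k i)) g u)
        | k : {ffun 'I_d -> 'I_q.+1} <- ks].
  by rewrite all_map; apply/allP => k; rewrite mem_filter => /andP[].
by apply/funext => x; rewrite /polyfun big_map big_filter.
Qed.

Lemma poly_deg_le_sum q (I : Type) (r : seq I) (P : pred I)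
    (F : I -> 'rV[R]_d -> R) :
  (forall i, poly_deg_le q (F i)) ->
  poly_deg_le q (fun y => \sum_(i <- r | P i) F i y).
Proof.
move=> Fq; elim: r => [|i r [l lq Sl]].
  by exists [::] => //; apply/funext => y; rewrite /polyfun !big_nil.
have [li liq Fi] := Fq i.
have Sl_at y : \sum_(i <- r | P i) F i y = polyfun l y by rewrite -Sl.
exists (if P i then li ++ l else l); first by case: (P i); rewrite ?all_cat ?liq.
apply/funext => y; rewrite big_cons Sl_at Fi.
by case: (P i); rewrite // /polyfun big_cat.
Qed.

Lemma pderivsB_polyfun q f l s :
  q_partially_derivable R d q f -> (size s <= q)%N ->
  pderivs R d s (fun y => f y - polyfun l y) =
  pderivs R d s f - pderivs R d s (polyfun l).
Proof.
move=> fD; elim: s => [|i s IH] sq //=.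
rewrite IH ?(ltnW sq) //; apply/funext => a.
by apply: deriveB; [exact: fD | exact: derivable_pderivs_polyfun].
Qed.

Lemma taylorB_poly_deg_le q f g u x :
  q_partially_derivable R d q f -> poly_deg_le q g ->
  taylor q (fun y => f y - g y) u x = taylor q f u x - g x.
Proof.
move=> fD [l lq ->]; rewrite -[in RHS](taylor_polyfun _ _ u lq) /taylor -sumrB.
apply: eq_bigr => k kq.
by rewrite /dmulti (@pderivsB_polyfun q) ?size_mindex_seq // !fctE mulrBr mulrBl.
Qed.

End Polynomials.

Section Grid.
Context {R : realType} {d : nat} {A : R} {K : nat}.
Hypothesis delta_gt0 : 0 < gdelta A K.

Lemma ler_gpt m n : (gpt R A K m <= gpt R A K n) = (m <= n)%N.
Proof. by rewrite /gpt lerD2l ler_pM2r // ler_nat. Qed.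

Lemma gptS m : gpt R A K m.+1 = gpt R A K m + gdelta A K.
Proof. by rewrite /gpt -natr1 mulrDl mul1r addrA. Qed.

Lemma gvec_inj : injective (@gvec R d A K).
Proof.
move=> k1 k2 /matrixP /(_ 0) k12; apply/ffunP => i; apply/val_inj/eqP.
by have := k12 i; rewrite !mxE eqn_leq -!ler_gpt => ->; rewrite lexx.
Qed.

Lemma vle_gvec_cell (r : {ffun 'I_d -> 'I_K}) (x : 'rV[R]_d) :
  (forall i, gvec A K r 0 i <= x 0 i < gvec A K r 0 i + gdelta A K) ->
  forall k, vle (gvec A K k) x = vle (gvec A K k) (gvec A K r).
Proof.
move=> xr k; apply: eq_forallb => i; have := xr i; rewrite !mxE ler_gpt.
case: leqP => [kr /andP[rx _] | rk /andP[_ xlt]].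
  by apply: le_trans rx; rewrite ler_gpt.
by apply/negbTE; rewrite -ltNge (lt_le_trans xlt) // -gptS ler_gpt.
Qed.

End Grid.

Lemma gdelta_gt0 (R : realType) (A : R) K : 0 < A -> (0 < K)%N -> 0 < gdelta A K.
Proof. by move=> A0 K0; rewrite /gdelta divr_gt0 ?ltr0n ?mulr_gt0. Qed.

Theorem lemma6 (R : realType) (d q : nat) (beta C A : R) (K : nat)
  (f : 'rV[R]_d -> R) (Pk : {ffun 'I_d -> 'I_K} -> 'rV[R]_d -> R)
  (r : {ffun 'I_d -> 'I_K}) (x : 'rV[R]_d) :
  0 < beta <= 1 ->
  pC_smooth q beta C f ->
  1 <= A ->
  (0 < K)%N ->
  (forall k : {ffun 'I_d -> 'I_K},
     Pk k = taylor q (fun y => f y - \sum_(l : {ffun 'I_d -> 'I_K} |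
                                  vlt (gvec A K l) (gvec A K k)) Pk l y)
                     (gvec A K k)) ->
  (forall i : 'I_d, gvec A K r 0 i <= x 0 i < gvec A K r 0 i + gdelta A K) ->
  Pglob A K Pk x = taylor q f (gvec A K r) x.
Proof.
move=> _ [fD _] A1 K0 PkE xr.
have delta_gt0 : 0 < gdelta A K by apply: gdelta_gt0 => //; apply: lt_le_trans A1.
have rx : vle (gvec A K r) x by apply/forallP => i; case/andP: (xr i).
rewrite /Pglob -big_mkcond (bigD1 r rx) /=.
rewrite (eq_bigl (fun l => vlt (gvec A K l) (gvec A K r))); last first.
  move=> l; rewrite (vle_gvec_cell delta_gt0 _ _ xr).
  by rewrite /vlt (inj_eq (gvec_inj delta_gt0)).
rewrite PkE taylorB_poly_deg_le ?subrK //; apply: poly_deg_le_sum => k.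
by rewrite PkE; apply: poly_deg_le_taylor.
Qed.
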